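(* Let $A$ be a commutative $\mathbb Q$-algebra, $a\in A$ a non-zero-divisor, $B=A[z]$ and $\mathcal D=\partial_z-a:B\to B$, $h\mapsto h'-ah$. Let $f=c_0+c_1z+\cdots+c_dz^d\in B$ with $v_a(c_i)\ge i+1$ for $0\le i\le d$. Then for every $g\in B$ we have $gf^m\in\mathrm{Im}\,\mathcal D$ for all sufficiently large $m$.
   Context: For $c\in A$, the $a$-order $v_a(c)\in\mathbb Z_{\ge0}\cup\{\infty\}$ is the supremum of the integers $m\ge0$ with $c\in Aa^m$ (so $v_a(c)=\infty$ if $c\in\bigcap_{m\ge1}Aa^m$). *)

From HB Require Import structures.
From mathcomp Require Import all_boot all_order all_algebra.
Set Implicit Arguments. Unset Strict Implicit. Unset Printing Implicit Defensive.
Import GRing.Theory.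
Local Open Scope ring_scope.

(* [va_ge a c n] : the a-order v_a(c) = sup { m >= 0 | c \in A a^m } is >= n,
   i.e. there is some m >= n with c \in A a^m. *)
Definition va_ge (A : comNzRingType) (a c : A) (n : nat) : Prop :=
  exists m : nat, (n <= m)%N /\ exists x : A, c = x * a ^+ m.

Definition nonzerodivisor (A : comNzRingType) (a : A) : Prop :=
  forall x : A, x * a = 0 -> x = 0.

Definition Dop (A : comNzRingType) (a : A) (h : {poly A}) : {poly A} :=
  h^`() - a%:P * h.

Definition in_ImD (A : comNzRingType) (a : A) (p : {poly A}) : Prop :=
  exists h : {poly A}, p = Dop a h.

(** Say that [p : {poly A}] has weight at least [s] if each coefficient [p_i]
    is divisible by [a^(i+s)]. Weights add under multiplication, multiplying
    by [g] lowers the weight by at most [size g], and the hypothesis says that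
    [f] has weight at least 1; hence [g f^m] has weight at least 1 as soon as
    [m > size g]. Every [p] of weight at least 1 lies in [Im D]: writing
    [p = a r] with [r] of weight at least 0 gives [p = r' - D r], and [r'] has
    weight at least 1 again but smaller size, so we conclude by induction. *)

From HB Require Import structures.
From mathcomp Require Import all_boot all_order all_algebra.
Import GRing.Theory.
Local Open Scope ring_scope.
Set Implicit Arguments. Unset Strict Implicit.

Section Weight.

Variables (A : comNzRingType) (a : A).

Definition wt_ge (s : nat) (p : {poly A}) : Prop :=
  forall i : nat, exists x : A, p`_i = x * a ^+ (i + s).

Lemma wt_ge_le s t (p : {poly A}) : (t <= s)%N -> wt_ge s p -> wt_ge t p.
Proof.
move=> le_ts wp i; have [x ->] := wp i; exists (x * a ^+ (s - t)).
by rewrite -mulrA -exprD addnCA subnK // addnC.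
Qed.

Lemma wt_ge_mul s t (p q : {poly A}) :
  wt_ge s p -> wt_ge t q -> wt_ge (s + t) (p * q).
Proof.
move=> wp wq i; rewrite coefM.
apply: (big_ind (fun c => exists x, c = x * a ^+ (i + (s + t)))).
- by exists 0; rewrite mul0r.
- by move=> _ _ [x ->] [y ->]; exists (x + y); rewrite mulrDl.
move=> [j /= lt_ji] _; have [x ->] := wp j; have [y ->] := wq (i - j)%N.
by exists (x * y); rewrite mulrACA -exprD addnACA subnKC.
Qed.

Lemma wt_ge_exp s (p : {poly A}) n : wt_ge s p -> wt_ge (s * n) (p ^+ n).
Proof.
move=> wp; elim: n => [|n IHn].
  move=> i; exists (i == 0)%:R; rewrite muln0 addn0 expr0 coef1.
  by case: i => [|i]; rewrite ?mul0r // expr0 mulr1.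
by rewrite exprS mulnS; apply: wt_ge_mul.
Qed.

Lemma wt_ge_mull s (g q : {poly A}) : wt_ge (size g + s) q -> wt_ge s (g * q).
Proof.
move=> wq i; rewrite coefM.
apply: (big_ind (fun c => exists x, c = x * a ^+ (i + s))).
- by exists 0; rewrite mul0r.
- by move=> _ _ [x ->] [y ->]; exists (x + y); rewrite mulrDl.
move=> [j /= lt_ji] _.
have [lt_jg | le_gj] := ltnP j (size g); last first.
  by exists 0; rewrite nth_default // !mul0r.
have [y ->] := wq (i - j)%N.
have le_exp : (i + s <= i - j + (size g + s))%N.
  by rewrite addnA leq_add2r -(leq_add2r j) addnAC subnK // leq_add2l ltnW.
exists (g`_j * y * a ^+ (i - j + (size g + s) - (i + s))).
by rewrite -!mulrA -exprD subnK.
Qed.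

Lemma wt_ge_deriv s (p : {poly A}) : wt_ge s p -> wt_ge s.+1 p^`().
Proof.
move=> wp i; rewrite coef_deriv; have [x ->] := wp i.+1.
by exists (x *+ i.+1); rewrite mulrnAl addnS.
Qed.

(* A is a choiceType, so the cofactors can be picked without any axiom. *)
Lemma wt_ge_factor s (p : {poly A}) : wt_ge s.+1 p ->
  exists r, [/\ p = a%:P * r, wt_ge s r & (size r <= size p)%N].
Proof.
move=> wp.
have ex_cof i : exists x, p`_i == x * a ^+ (i + s.+1).
  by have [x ->] := wp i; exists x.
pose r := \poly_(i < size p) (xchoose (ex_cof i) * a ^+ (i + s)).
exists r; split; last exact: size_poly.
- apply/polyP => i; rewrite coefCM coef_poly.
  case: ltnP => [_ | le_pi]; last by rewrite mulr0 nth_default.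
  by rewrite mulrCA -exprS -addnS; exact/eqP/(xchooseP (ex_cof i)).
- move=> i; rewrite coef_poly; case: ltnP => _; first by eexists.
  by exists 0; rewrite mul0r.
Qed.

Lemma DopB (h k : {poly A}) : Dop a (h - k) = Dop a h - Dop a k.
Proof. by rewrite /Dop derivB mulrBr !opprD !opprK addrACA. Qed.

Lemma mulC_Dop (r : {poly A}) : a%:P * r = r^`() - Dop a r.
Proof. by rewrite /Dop opprB addrC subrK. Qed.

Lemma wt_ge1_in_ImD (p : {poly A}) : wt_ge 1 p -> in_ImD a p.
Proof.
elim: (size p) {-2}p (leqnn (size p)) => [|n IHn] {}p le_pn wp.
  move: le_pn; rewrite leqn0 size_poly_eq0 => /eqP ->.
  by exists 0; rewrite /Dop deriv0 mulr0 subr0.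
have [r [pE wr le_rp]] := wt_ge_factor wp.
have [h r'E] : in_ImD a r^`().
  apply: IHn (wt_ge_deriv wr).
  have [-> | r_neq0] := eqVneq r 0; first by rewrite deriv0 size_poly0.
  by rewrite -ltnS (leq_trans (lt_size_deriv r_neq0)) // (leq_trans le_rp).
by exists (h - r); rewrite pE mulC_Dop r'E DopB.
Qed.

End Weight.

Theorem corollary2p12 (A : comAlgType rat) (a : A) (f : {poly A}) :
  nonzerodivisor a ->
  (forall i : nat, va_ge a f`_i i.+1) ->
  forall g : {poly A}, exists N : nat, forall m : nat, (N <= m)%N ->
    in_ImD a (g * f ^+ m).
Proof.
move=> _ vf g.
have wf : wt_ge a 1 f.
  move=> i; have [m [le_im [x ->]]] := vf i.
  by exists (x * a ^+ (m - i.+1)); rewrite -mulrA -exprD addn1 subnK.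
exists (size g).+1 => m lt_gm.
(* Inferring [p] here makes unification blow up. *)
apply: (wt_ge1_in_ImD (p := g * f ^+ m)).
apply: (wt_ge_le (s := m - size g)); first by rewrite subn_gt0.
apply: wt_ge_mull; rewrite subnKC; last exact: ltnW.
by have := wt_ge_exp m wf; rewrite mul1n.
Qed.
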